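(* For each $a\in A\setminus\{a^*\}$ and $\ell\in\mathbb{R}$: (1) $I_{a^*,a}(\ell)-I_{a,a}(\ell)=-\ell$; (2) $I_{a^*,a}(\ell)\ge I_{a^*,a}(\hat L_a(a))$ whenever $\ell\le\hat L_a(a)$.
   Context: Finite action set $A$, $a^*\in A$. A measurable space $Z$ with $\sigma$-finite measure $\nu$; for each $n$ and $a\in A$, a probability measure $\mu^n_a$ on $Z$ with density $g^n_a$ w.r.t. $\nu$. For $a'\neq a^*$, $L_n(a')=\frac1n\log\frac{g^n_{a^*}(z)}{g^n_{a'}(z)}$, well-defined $\mu^n_a$-a.s. for all $a\in A$; $\mathbb{P}_a$ is probability under $\mu^n_a$. For each $a\in A$, $a'\neq a^*$, $I_{a,a'}:\mathbb{R}\to[0,\infty]$ is a rate function: for all measurable $B\subseteq\mathbb{R}$, $-\inf_{\mathrm{int}B}I_{a,a'}\le\liminf_n\frac1n\log\mathbb{P}_a[L_n(a')\in B]\le\limsup_n\frac1n\log\mathbb{P}_a[L_n(a')\in B]\le-\inf_{\mathrm{cl}B}I_{a,a'}$. Each $I_{a,a'}$ has a unique minimizer $\hat L_a(a')$, with $\hat L_a(a')\neq\hat L_{\tilde a}(a')$ for $a\neq\tilde a$, and compact level sets; $I_{a^*,a'}$ is continuous at $\hat L_{a'}(a')$ and $\hat L_{a^*}(a')$. *)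

From HB Require Import structures.
From mathcomp Require Import all_boot all_order all_algebra.
From mathcomp Require Import all_classical all_reals all_analysis.
Set Implicit Arguments. Unset Strict Implicit. Unset Printing Implicit Defensive.
Import Order.TTheory GRing.Theory Num.Theory.
Import numFieldNormedType.Exports.
Local Open Scope classical_set_scope.
Local Open Scope ring_scope.

Definition LLR (R : realType) (A Z : Type) (g : nat -> A -> Z -> R)
  (astar a' : A) (n : nat) (z : Z) : R :=
  (n%:R)^-1 * ln (g n astar z / g n a' z).

Definition LDP_bounds (R : realType) (P : nat -> set R -> \bar R)
  (I : R -> \bar R) : Prop :=
  forall B : set R, measurable B ->
    let s := fun n : nat => (((n%:R)^-1)%:E * lne (P n B))%E in
    [/\ (- ereal_inf (I @` interior B) <= limn_einf s)%E,
        (limn_einf s <= limn_esup s)%E &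
        (limn_esup s <= - ereal_inf (I @` closure B))%E].

Definition rate_function (R : realType) (P : nat -> set R -> \bar R)
  (I : R -> \bar R) : Prop :=
  (forall x, (0 <= I x)%E) /\ LDP_bounds P I.

Definition unique_minimizer (R : realType) (I : R -> \bar R) (x : R) : Prop :=
  (forall y, (I x <= I y)%E) /\
  (forall x', (forall y, (I x' <= I y)%E) -> x' = x).

Definition compact_level_sets (R : realType) (I : R -> \bar R) : Prop :=
  forall alpha : R, compact [set x | (I x <= alpha%:E)%E].

(* Where both densities are positive, g_{a*} = e^{n L_n} g_a.  Hence on the
   ball B of radius e around l the laws of L_n(a) under a* and under a differ
   by a factor between e^{n (l - e)} and e^{n (l + e)}:
     P_{a*}[L_n in B] <= e^{n (l + e)} P_a[L_n in B]   and
     P_a[L_n in B] <= e^{-n (l - e)} P_{a*}[L_n in B].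
   Combining the LDP lower bound for one law with the upper bound for the other
   and letting e -> 0 (the rates are lower semicontinuous since their level
   sets are compact) gives I_{a,a}(l) <= I_{a*,a}(l) + l and
   I_{a*,a}(l) <= I_{a,a}(l) - l.  Part (2) then follows from the minimality
   of I_{a,a} at \hat L_a(a). *)

From HB Require Import structures.
From mathcomp Require Import all_boot all_order all_algebra.
From mathcomp Require Import all_classical all_reals all_analysis.
From mathcomp Require Import lra measurable_realfun.
Set Implicit Arguments.
Unset Strict Implicit.
Unset Printing Implicit Defensive.

Import Order.TTheory GRing.Theory Num.Theory.
Import numFieldNormedType.Exports.
Local Open Scope classical_set_scope.
Local Open Scope ring_scope.

Section ExtendedReals.
Context {R : realType}.
Local Open Scope ereal_scope.
Implicit Types (u : (\bar R)^nat) (x y : \bar R).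

Lemma lee_of_EFin_lt x y : (forall a : R, a%:E < x -> a%:E <= y) -> x <= y.
Proof.
case: x => [x| |] h; last by rewrite leNye.
- apply/lee_subgt0Pr => e e0; rewrite -EFinB; apply: h.
  by rewrite lte_fin ltrBlDr ltrDl.
- by rewrite (@eq_infty _ y) // => a; apply: h; rewrite ltey.
Qed.

Lemma limn_esup_le_eventually u v :
  (forall n, (0 < n)%N -> u n <= v n) -> limn_esup u <= limn_esup v.
Proof.
move=> uv; rewrite !limn_esup_lim.
apply: lee_lim; [exact: is_cvg_esups|exact: is_cvg_esups|].
near=> n; apply: ge_ereal_sup => _ [k /= nk <-].
apply: le_trans (uv k _) _; first by apply: leq_trans nk; near: n; exists 1%N.
by apply: ereal_sup_ubound; exists k.
Unshelve. all: by end_near. Qed.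

Lemma limn_esupDl u (c : R) :
  limn_esup (fun n => c%:E + u n) = c%:E + limn_esup u.
Proof.
have -> : (fun n => c%:E + u n) = -%E \o (fun n => (- c)%:E + (-%E \o u) n).
  by apply/funext => n /=; rewrite oppeD // EFinN !oppeK.
rewrite (limn_esupN (fun n => (- c)%:E + (-%E \o u) n)).
by rewrite limn_einf_shift // limn_einfN oppeD // EFinN !oppeK.
Qed.

Lemma lne_le_expR_scale (P Q : \bar R) (n : nat) (c : R) : (0 < n)%N ->
  0 <= P -> 0 <= Q -> P <= (expR (n%:R * c))%:E * Q ->
  (n%:R^-1)%:E * lne P <= c%:E + (n%:R^-1)%:E * lne Q.
Proof.
move=> n0 P0 Q0 PQ.
have nR_gt0 : (0 < n%:R :> R)%R by rewrite ltr0n.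
move: PQ; have [->|Qpos] := eqVneq Q 0.
  rewrite mule0 => P_le0; have -> : P = 0 by apply/le_anti; rewrite P_le0 P0.
  by rewrite le0_lneNy // mulrNy gtr0_sg ?invr_gt0 // mul1e leNye.
move=> PQ; have Qgt0 : 0 < Q by rewrite lt_def Qpos Q0.
have -> : c%:E + (n%:R^-1)%:E * lne Q =
    (n%:R^-1)%:E * lne ((expR (n%:R * c))%:E * Q).
  have expR_pos : (expR (n%:R * c))%:E \in `]0, +oo].
    by rewrite in_itv /= lte_fin expR_gt0 leey.
  have Q_pos : Q \in `]0, +oo] by rewrite in_itv /= Qgt0 leey.
  by rewrite lneM // lne_EFin ?expR_gt0 // expRK muleDr // -EFinM mulKf ?gt_eqF.
apply: lee_wpmul2l; first by rewrite lee_fin invr_ge0 ltW.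
rewrite lee_lne // in_itv /= ?leey ?P0 //.
by rewrite mule_ge0 // lee_fin expR_ge0.
Qed.

End ExtendedReals.

Section LowerSemicontinuity.
Context {R : realType}.
Local Open Scope ereal_scope.
Implicit Type J : R -> \bar R.

Lemma compact_level_sets_lsc J : compact_level_sets J -> lower_semicontinuous J.
Proof.
move=> cJ; apply/lower_semicontinuousP => a.
rewrite (_ : [set x | a%:E < J x] = ~` [set x | J x <= a%:E]).
  exact/closed_openC/(compact_closed (@norm_hausdorff _ _) (cJ a)).
by apply/seteqP; split => x /=; rewrite ltNge => /negP.
Qed.

Lemma lsc_closed_ball_inf J (l a : R) : lower_semicontinuous J ->
  a%:E < J l -> exists2 r, (0 < r)%R &
    forall e, (0 < e <= r)%R -> a%:E <= ereal_inf (J @` closed_ball l e).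
Proof.
move=> lscJ /lscJ [V /nbhs_ballP [r r0 rV] aJ].
exists (r / 2)%R => [|e /andP [_ er]]; first by rewrite divr_gt0.
apply: le_ereal_inf_tmp => _ [x xe <-]; apply/ltW/aJ/rV.
exact: subset_closure_half r0 _ (le_closed_ball er xe).
Qed.

End LowerSemicontinuity.

Section TiltedLargeDeviations.
Context {R : realType}.
Local Open Scope ereal_scope.
Variables (P1 P2 : nat -> set R -> \bar R) (J1 J2 : R -> \bar R).
Hypotheses (LDP1 : LDP_bounds P1 J1) (LDP2 : LDP_bounds P2 J2).
Hypotheses (P1_ge0 : forall n B, 0 <= P1 n B) (P2_ge0 : forall n B, 0 <= P2 n B).

Lemma LDP_tilted_open_bound (B : set R) (l c : R) : open B -> B l ->
  (forall n, (0 < n)%N -> P1 n B <= (expR (n%:R * c))%:E * P2 n B) ->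
  - J1 l <= c%:E - ereal_inf (J2 @` closure B).
Proof.
move=> oB Bl P12.
have [lower1 _ _] := LDP1 (open_measurable oB).
have [_ _ upper2] := LDP2 (open_measurable oB).
have J1_int : - J1 l <= - ereal_inf (J1 @` interior B).
  by rewrite leeN2; apply: ereal_inf_lbound; exists l; rewrite ?(interior_id B).1.
apply: (le_trans J1_int); apply: (le_trans lower1).
apply: (le_trans (limn_einf_sup _)); apply: le_trans (leeD2l c%:E upper2).
rewrite -limn_esupDl; apply: limn_esup_le_eventually => n n0.
exact: lne_le_expR_scale n0 (P1_ge0 n B) (P2_ge0 n B) (P12 n n0).
Qed.

Lemma LDP_tilted_rate_le (l k : R) : compact_level_sets J2 ->
  (forall e, (0 < e)%R -> forall n, (0 < n)%N ->
     P1 n (ball l e) <= (expR (n%:R * (k + e)))%:E * P2 n (ball l e)) ->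
  J2 l <= J1 l + k%:E.
Proof.
move=> cJ2 P12; apply: lee_of_EFin_lt => a aJ2.
have [r r0 a_inf] := lsc_closed_ball_inf (compact_level_sets_lsc cJ2) aJ2.
apply/lee_addgt0Pr => e e0.
pose d := Num.min e r.
have d0 : (0 < d)%R by rewrite lt_min e0 r0.
have de : (d <= e)%R by rewrite ge_min lexx.
have dr : (0 < d <= r)%R by rewrite d0 ge_min lexx orbT.
have H := LDP_tilted_open_bound (ball_open l d) (ballxx l d0) (P12 d d0).
have {H} : - J1 l <= (k + d - a)%:E.
  apply: (le_trans H); rewrite EFinB; apply: leeD2l; rewrite leeN2.
  exact: a_inf.
rewrite leeNl -addeA -EFinD -leeBlDr // -EFinN -EFinB => /(le_trans _); apply.
by rewrite lee_fin; lra.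
Qed.

End TiltedLargeDeviations.

Section DensityComparison.
Context d (Z : measurableType d) (R : realType) (nu : {measure set Z -> \bar R}).
Variables (P Q : {measure set Z -> \bar R}) (p q : Z -> R).
Hypotheses (p_meas : measurable_fun setT p) (q_meas : measurable_fun setT q).
Hypotheses (p_ge0 : forall z, 0 <= p z) (q_ge0 : forall z, 0 <= q z).
Hypothesis P_dens : forall E, measurable E -> P E = (\int[nu]_(z in E) (p z)%:E)%E.
Hypothesis Q_dens : forall E, measurable E -> Q E = (\int[nu]_(z in E) (q z)%:E)%E.

Lemma measure_le_density_scale (c : R) (S E : set Z) : 0 <= c ->
  measurable S -> measurable E -> P (~` S) = 0%E ->
  (forall z, E z -> S z -> p z <= c * q z) -> (P E <= c%:E * Q E)%E.
Proof.
move=> c0 mS mE PS0 pq.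
have mES : measurable (E `&` S) by exact: measurableI.
have -> : P E = P (E `&` S).
  rewrite [LHS](measureDI P mE mS).
  rewrite (@subset_measure0 _ _ _ P (E `\` S) (~` S)) ?add0e //.
  - exact: measurableD.
  - exact: measurableC.
apply: (@le_trans _ _ (c%:E * Q (E `&` S))%E).
  rewrite P_dens // Q_dens // -ge0_integralZl_EFin //.
  - apply: ge0_le_integral => //.
    + by move=> z _; rewrite lee_fin.
    + exact/measurable_EFinP/measurable_funTS.
    + by apply/measurable_EFinP/measurable_funM => //; exact: measurable_funTS.
    + by move=> z [Ez Sz]; rewrite -EFinM lee_fin pq.
  - by move=> z _; rewrite lee_fin.
  - exact/measurable_EFinP/measurable_funTS.
by apply: lee_wpmul2l; [rewrite lee_fin | exact: measureIl].
Qed.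

End DensityComparison.

Section LogLikelihoodRatio.
Context d (Z : measurableType d) (R : realType) (A : Type).
Variables (g : nat -> A -> Z -> R) (astar a : A).
Hypothesis g_meas : forall n b, measurable_fun setT (g n b).
Hypothesis g_ge0 : forall n b z, 0 <= g n b z.

Local Notation X := (LLR g astar a).

Definition LLR_domain n := [set z | 0 < g n astar z] `&` [set z | 0 < g n a z].

Lemma measurable_LLR_domain n : measurable (LLR_domain n).
Proof.
by apply: measurableI; rewrite -[Y in measurable Y]setTI -preimage_itvoy;
  apply: g_meas.
Qed.

(* Off [LLR_domain n] the ratio of densities is [0] and [ln 0 = 0]. *)
Lemma LLR_indicE n : X n = fun z =>
  n%:R^-1 * (\1_(LLR_domain n) z * (ln (g n astar z) - ln (g n a z))).
Proof.
apply/funext => z; rewrite /LLR indicE; congr (_ * _).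
have [|zS] := boolP (z \in LLR_domain n).
  by rewrite inE => -[pos_astar pos_a] /=; rewrite mulr1n mul1r ln_div.
rewrite /= mulr0n mul0r.
have [->|->] : g n astar z = 0 \/ g n a z = 0.
  move/negP: zS; rewrite inE => /not_andP [] /negP; rewrite -leNgt => le0;
    [left|right]; apply/le_anti; rewrite le0 g_ge0 //.
  by rewrite mul0r ln0.
by rewrite invr0 mulr0 ln0.
Qed.

Lemma measurable_LLR n : measurable_fun setT (X n).
Proof.
rewrite LLR_indicE; apply: measurable_funM => //.
apply: measurable_funM; first exact/measurable_indic/measurable_LLR_domain.
by apply: measurable_funB; apply: measurableT_comp => //; exact: measurable_ln.
Qed.

Lemma LLR_expRK n z : (0 < n)%N -> LLR_domain n z ->
  g n astar z = expR (n%:R * X n z) * g n a z.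
Proof.
move=> n0 [pos_astar pos_a]; rewrite /LLR mulrA divff ?pnatr_eq0 -?lt0n // mul1r.
by rewrite lnK ?posrE ?divr_gt0 // divfK ?gt_eqF.
Qed.

Lemma measurable_LLR_preimage n (B : set R) :
  measurable B -> measurable (X n @^-1` B).
Proof. by move=> mB; rewrite -[Y in measurable Y]setTI; exact: measurable_LLR. Qed.

Variables (nu : {measure set Z -> \bar R}) (mu : nat -> A -> probability Z R).
Hypothesis g_dens : forall n b (E : set Z), measurable E ->
  mu n b E = (\int[nu]_(z in E) (g n b z)%:E)%E.
Hypothesis LLR_domain_ae : forall n b,
  {ae mu n b, forall z, 0 < g n astar z /\ 0 < g n a z}.

Lemma measure_LLR_domainC n b : mu n b (~` LLR_domain n) = 0%E.
Proof.
apply/(negligibleP (mu n b) (measurableC (measurable_LLR_domain n))).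
exact: LLR_domain_ae.
Qed.

Lemma measure_LLR_preimage_tilt_astar n (B : set R) (c : R) : (0 < n)%N ->
  measurable B -> (forall x, B x -> x <= c) ->
  (mu n astar (X n @^-1` B) <= (expR (n%:R * c))%:E * mu n a (X n @^-1` B))%E.
Proof.
move=> n0 mB Bc; apply: (measure_le_density_scale (g_meas n astar) (g_meas n a)
  (g_ge0 n astar) (g_ge0 n a) (g_dens n astar) (g_dens n a) (expR_ge0 _)
  (measurable_LLR_domain n) (measurable_LLR_preimage n mB)
  (measure_LLR_domainC n astar)).
move=> z /Bc Xc Sz; rewrite (LLR_expRK n0 Sz) ler_wpM2r // ler_expR ler_wpM2l //.
Qed.

Lemma measure_LLR_preimage_tilt n (B : set R) (c : R) : (0 < n)%N ->
  measurable B -> (forall x, B x -> - c <= x) ->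
  (mu n a (X n @^-1` B) <= (expR (n%:R * c))%:E * mu n astar (X n @^-1` B))%E.
Proof.
move=> n0 mB Bc; apply: (measure_le_density_scale (g_meas n a) (g_meas n astar)
  (g_ge0 n a) (g_ge0 n astar) (g_dens n a) (g_dens n astar) (expR_ge0 _)
  (measurable_LLR_domain n) (measurable_LLR_preimage n mB)
  (measure_LLR_domainC n a)).
move=> z /Bc cX Sz; rewrite (LLR_expRK n0 Sz) mulrA -expRD ler_peMl //.
by rewrite -expR0 ler_expR -mulrDr mulr_ge0 // addrC -lerBlDr sub0r.
Qed.

End LogLikelihoodRatio.

Theorem lemma4 (R : realType) (A : finType) (astar : A)
  (d : measure_display) (Z : measurableType d)
  (nu : {measure set Z -> \bar R}) (nu_sf : sigma_finite setT nu)
  (mu : nat -> A -> probability Z R) (g : nat -> A -> Z -> R)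
  (g_meas : forall n a, measurable_fun setT (g n a))
  (g_ge0 : forall n a z, 0 <= g n a z)
  (g_dens : forall n a (E : set Z), measurable E ->
     mu n a E = (\int[nu]_(z in E) (g n a z)%:E)%E)
  (L_wd : forall n a a', a' != astar ->
     {ae mu n a, forall z, 0 < g n astar z /\ 0 < g n a' z})
  (I : A -> A -> R -> \bar R) (Lhat : A -> A -> R)
  (I_rate : forall a a', a' != astar ->
     rate_function (fun n B => mu n a (LLR g astar a' n @^-1` B)) (I a a'))
  (I_min : forall a a', a' != astar -> unique_minimizer (I a a') (Lhat a a'))
  (Lhat_dist : forall a a' a2, a' != astar -> a != a2 ->
     Lhat a a' != Lhat a2 a')
  (I_cpt : forall a a', a' != astar -> compact_level_sets (I a a'))
  (I_cont1 : forall a', a' != astar ->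
     {for Lhat a' a', continuous (I astar a')})
  (I_cont2 : forall a', a' != astar ->
     {for Lhat astar a', continuous (I astar a')}) :
  forall a, a != astar -> forall l : R,
    I astar a l = (I a a l - l%:E)%E /\
    (l <= Lhat a a -> (I astar a (Lhat a a) <= I astar a l)%E).
Proof.
move=> a na.
have [_ LDP_astar] := I_rate astar a na; have [_ LDP_a] := I_rate a a na.
have P_ge0 b n B : (0 <= mu n b (LLR g astar a n @^-1` B))%E by exact: measure_ge0.
have tilt_astar := measure_LLR_preimage_tilt_astar g_meas g_ge0 g_dens
  (fun n b => L_wd n b a na).
have tilt_a := measure_LLR_preimage_tilt g_meas g_ge0 g_dens
  (fun n b => L_wd n b a na).
have mball (l e : R) : measurable (ball l e).
  exact: open_measurable (ball_open l e).
have ball_bounds (l e x : R) : ball l e x -> l - e < x < l + e.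
  by rewrite -ball_normE /= ltr_distlC.
have I_a_le l : (I a a l <= I astar a l + l%:E)%E.
  apply: (LDP_tilted_rate_le LDP_astar LDP_a (P_ge0 astar) (P_ge0 a)).
    exact: I_cpt.
  move=> e e0 n n0; apply: (tilt_astar _ _ _ n0 (mball l e)) => x.
  by case/ball_bounds/andP => _ /ltW.
have I_astar_le l : (I astar a l <= I a a l - l%:E)%E.
  apply: (LDP_tilted_rate_le LDP_a LDP_astar (P_ge0 a) (P_ge0 astar)).
    exact: I_cpt.
  move=> e e0 n n0; apply: (tilt_a _ _ _ n0 (mball l e)) => x.
  by rewrite opprD opprK; case/ball_bounds/andP => /ltW.
have rate_shift l : I astar a l = (I a a l - l%:E)%E.
  by apply/le_anti; rewrite I_astar_le leeBlDr // I_a_le.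
move=> l; split => // l_le; rewrite !rate_shift leeD ?(I_min a a na).1 //.
by rewrite lee_fin lerN2.
Qed.
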